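(* Let $A$ be a seminormal cancellative monoid. Then the conductor ideal $I$ of the inclusion $A\hookrightarrow A_{\mathrm{nor}}$ is a radical ideal of both $A$ and $A_{\mathrm{nor}}$.
   Context: A monoid is a pointed commutative monoid; cancellative means $ac=bc$ with $c\ne0$ implies $a=b$; seminormal means reduced ($a^2=b^2,a^3=b^3\Rightarrow a=b$) and whenever $x^3=y^2$ there is $z$ with $x=z^2,y=z^3$. For cancellative $A$, $A^+$ is the group completion of $A\setminus\{0\}$ with a basepoint adjoined, and $A_{\mathrm{nor}}=\{\alpha\in A^+:\alpha^n\in A\text{ for some }n\ge1\}$. The conductor ideal of $A\subset A_{\mathrm{nor}}$ is $I=\{a\in A: A_{\mathrm{nor}}\cdot a\subseteq A\}$ (an ideal of both $A$ and $A_{\mathrm{nor}}$). An ideal $I$ of a monoid $B$ is radical if $b^n\in I$ for some $n\ge1$ implies $b\in I$. *)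

Record PMonoid := {
  carrier :> Type;
  mmul : carrier -> carrier -> carrier;
  mone : carrier;
  mzero : carrier;
  mmul_assoc : forall a b c, mmul a (mmul b c) = mmul (mmul a b) c;
  mmul_comm : forall a b, mmul a b = mmul b a;
  mmul_1l : forall a, mmul mone a = a;
  mmul_0l : forall a, mmul mzero a = mzero
}.

Arguments mmul {p} _ _.
Arguments mone {p}.
Arguments mzero {p}.

Fixpoint mpow {A : PMonoid} (a : A) (n : nat) : A :=
  match n with
  | O => mone
  | S n' => mmul a (mpow a n')
  end.

Definition cancellative (A : PMonoid) : Prop :=
  forall a b c : A, c <> mzero -> mmul a c = mmul b c -> a = b.

Definition reduced (A : PMonoid) : Prop :=
  forall a b : A, mpow a 2 = mpow b 2 -> mpow a 3 = mpow b 3 -> a = b.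

Definition seminormal (A : PMonoid) : Prop :=
  reduced A /\
  forall x y : A, mpow x 3 = mpow y 2 ->
    exists z : A, x = mpow z 2 /\ y = mpow z 3.

(** Group completion A^+ of a cancellative A.  A non-basepoint element of
    A^+ is a fraction p/q with p, q nonzero elements of A, and
    p/q = p'/q'  iff  p q' = p' q (valid since A is cancellative).
    All predicates below are stated on representatives (p, q); they are
    invariant under this equivalence.  The basepoint of A^+ is 0 = 0/1. *)

Definition frac_in_A {A : PMonoid} (p q : A) : Prop :=
  exists c : A, p = mmul q c.

Definition frac_in_Anor {A : PMonoid} (p q : A) : Prop :=
  exists n : nat, 1 <= n /\ frac_in_A (mpow p n) (mpow q n).

(** Conductor ideal I = { a in A : A_nor * a subseteq A }.
    (The basepoint of A_nor gives 0 * a = 0 in A, so only nonzero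
    fractions need to be checked.) *)
Definition conductor {A : PMonoid} (a : A) : Prop :=
  forall p q : A, p <> mzero -> q <> mzero -> frac_in_Anor p q ->
    frac_in_A (mmul p a) q.

Definition frac_in_I {A : PMonoid} (p q : A) : Prop :=
  exists a : A, conductor a /\ p = mmul q a.

Definition conductor_ideal_of_A (A : PMonoid) : Prop :=
  forall a b : A, conductor a -> conductor (mmul b a).

Definition conductor_radical_in_A (A : PMonoid) : Prop :=
  forall (a : A) (n : nat), 1 <= n -> conductor (mpow a n) -> conductor a.

Definition conductor_ideal_of_Anor (A : PMonoid) : Prop :=
  forall p q a : A, p <> mzero -> q <> mzero -> frac_in_Anor p q ->
    conductor a -> frac_in_I (mmul p a) q.

(** I is a radical ideal of A_nor: for alpha = p/q in A_nor,
    alpha^n in I with n >= 1 implies alpha in I.  (The basepoint case is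
    trivial since 0 in I.) *)
Definition conductor_radical_in_Anor (A : PMonoid) : Prop :=
  forall (p q : A) (n : nat), p <> mzero -> q <> mzero -> frac_in_Anor p q ->
    1 <= n -> frac_in_I (mpow p n) (mpow q n) -> frac_in_I p q.

From Stdlib Require Import Arith Lia.

(* Seminormality says that alpha is in A as soon as alpha^2 and alpha^3
   are (take x = alpha^2, y = alpha^3).  Applied to alpha^j, whose 2j-th
   and 3j-th powers are in A whenever all powers beyond j are, this shows
   by descent that an element of A^+ whose powers are eventually in A is
   in A.  If a^n is in I and alpha is in A_nor, then
   (alpha a)^k = alpha^k a^n a^(k-n) is in A for k >= n, so alpha a is in A:
   I is radical in A.  If alpha in A_nor has alpha^n = a in I, then
   alpha^k = alpha^(k-n) a is in A for k >= n, so alpha is in A and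
   radicality in A_nor reduces to radicality in A. *)

Section ConductorRadical.

Variable A : PMonoid.
Implicit Types a b c p q : A.

Lemma mmul_1r a : mmul a mone = a.
Proof. rewrite mmul_comm; apply mmul_1l. Qed.

Lemma mmul_CA a b c : mmul a (mmul b c) = mmul b (mmul a c).
Proof. now rewrite !mmul_assoc, (mmul_comm A a b). Qed.

Lemma mmul_ACA a b c p : mmul (mmul a b) (mmul c p) = mmul (mmul a c) (mmul b p).
Proof. now rewrite <- !mmul_assoc, (mmul_CA b c p). Qed.

Lemma mpow1 a : mpow a 1 = a.
Proof. apply mmul_1r. Qed.

Lemma mpowD a n m : mpow a (n + m) = mmul (mpow a n) (mpow a m).
Proof. induction n; simpl; [now rewrite mmul_1l | now rewrite IHn, mmul_assoc]. Qed.

Lemma mpowMn a b n : mpow (mmul a b) n = mmul (mpow a n) (mpow b n).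
Proof. induction n; simpl; [now rewrite mmul_1l | now rewrite IHn, mmul_ACA]. Qed.

Lemma mpowM a n m : mpow a (m * n) = mpow (mpow a n) m.
Proof. induction m; simpl; [reflexivity | now rewrite mpowD, IHm]. Qed.

Lemma mpowAC a n m : mpow (mpow a n) m = mpow (mpow a m) n.
Proof. now rewrite <- !mpowM, Nat.mul_comm. Qed.

Lemma frac_in_A_mul p q p' q' :
  frac_in_A p q -> frac_in_A p' q' -> frac_in_A (mmul p p') (mmul q q').
Proof. intros [c ->] [c' ->]. exists (mmul c c'). apply mmul_ACA. Qed.

Lemma frac_in_A_mpow p q n : frac_in_A p q -> frac_in_A (mpow p n) (mpow q n).
Proof. intros [c ->]. exists (mpow c n). apply mpowMn. Qed.

Lemma frac_in_Anor_mpow p q k :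
  frac_in_Anor p q -> frac_in_Anor (mpow p k) (mpow q k).
Proof.
  intros [n [Hn Hpq]]. exists n. split; [exact Hn|].
  rewrite !(mpowAC _ k n). now apply frac_in_A_mpow.
Qed.

Lemma frac_in_Anor_mul p q p' q' :
  frac_in_Anor p q -> frac_in_Anor p' q' -> frac_in_Anor (mmul p p') (mmul q q').
Proof.
  intros [n [Hn Hpq]] [m [Hm Hpq']]. exists (n * m). split; [lia|].
  rewrite !mpowMn. apply frac_in_A_mul.
  - rewrite Nat.mul_comm, !mpowM. now apply frac_in_A_mpow.
  - rewrite !mpowM. now apply frac_in_A_mpow.
Qed.

Lemma conductor_mull a b : conductor a -> conductor (mmul b a).
Proof.
  intros Ha p q Hp Hq Hpq. destruct (Ha p q Hp Hq Hpq) as [c Hc].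
  exists (mmul b c). now rewrite mmul_CA, Hc, mmul_CA.
Qed.

Hypothesis cancelA : cancellative A.

Lemma mmul_neq0 a b : a <> mzero -> b <> mzero -> mmul a b <> mzero.
Proof.
  intros Ha Hb E. apply Ha, (cancelA a mzero b Hb). now rewrite mmul_0l.
Qed.

Lemma mpow_neq0 a n : a <> mzero -> mpow a n <> mzero.
Proof.
  intros Ha. induction n; simpl; [|now apply mmul_neq0].
  intro E. apply Ha. now rewrite <- (mmul_1l A a), E, mmul_0l.
Qed.

(* If c = alpha a with alpha in A_nor, then beta c = (alpha beta) a for beta in A_nor. *)
Lemma conductor_mul_frac_in_Anor p q a c : p <> mzero -> q <> mzero ->
  frac_in_Anor p q -> conductor a -> mmul p a = mmul q c -> conductor c.
Proof.
  intros Hp Hq Hpq Ha Hc p' q' Hp' Hq' Hpq'.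
  destruct (Ha (mmul p p') (mmul q q') (mmul_neq0 p p' Hp Hp')
             (mmul_neq0 q q' Hq Hq') (frac_in_Anor_mul p q p' q' Hpq Hpq'))
    as [e He].
  exists e. apply (cancelA _ _ q Hq).
  rewrite <- mmul_assoc, (mmul_comm _ c q), <- Hc.
  rewrite mmul_assoc, (mmul_comm _ p' p), He, <- mmul_assoc.
  apply mmul_comm.
Qed.

Hypothesis seminormalA : seminormal A.

Lemma frac_in_A_seminormal p q : q <> mzero ->
  frac_in_A (mpow p 2) (mpow q 2) -> frac_in_A (mpow p 3) (mpow q 3) ->
  frac_in_A p q.
Proof.
  destruct seminormalA as [reducedA sqrt_cube].
  intros Hq [x Hx] [y Hy].
  assert (Exy : mpow x 3 = mpow y 2).
  { apply (cancelA _ _ (mpow q 6)); [now apply mpow_neq0|].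
    rewrite (mmul_comm _ (mpow x 3)), (mmul_comm _ (mpow y 2)).
    replace 6 with (3 * 2) at 1 by reflexivity. replace 6 with (2 * 3) by reflexivity.
    rewrite !mpowM, <- !mpowMn, <- Hx, <- Hy, <- !mpowM.
    now rewrite Nat.mul_comm. }
  destruct (sqrt_cube x y Exy) as [z [-> ->]].
  exists z. apply reducedA; now rewrite mpowMn.
Qed.

Lemma frac_in_A_of_pow_tail p q m : q <> mzero ->
  (forall k, m <= k -> frac_in_A (mpow p k) (mpow q k)) -> frac_in_A p q.
Proof.
  intros Hq Htail. rewrite <- (mpow1 p), <- (mpow1 q).
  assert (Hstail : forall k, S m <= k -> frac_in_A (mpow p k) (mpow q k))
    by (intros k Hk; apply Htail; lia).
  clear Htail. induction m as [|m IH]; [apply Hstail; lia|].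
  apply IH. intros k Hk.
  destruct (Nat.eq_dec k (S m)) as [->|Hne]; [|apply Hstail; lia].
  apply frac_in_A_seminormal; [now apply mpow_neq0| |];
    rewrite <- !mpowM; apply Hstail; lia.
Qed.

Lemma conductor_of_mpow a n : 1 <= n -> conductor (mpow a n) -> conductor a.
Proof.
  intros Hn Ha p q Hp Hq Hpq.
  apply (frac_in_A_of_pow_tail _ _ n Hq). intros k Hk.
  destruct (Ha (mpow p k) (mpow q k) (mpow_neq0 p k Hp) (mpow_neq0 q k Hq)
             (frac_in_Anor_mpow p q k Hpq)) as [c Hc].
  exists (mmul c (mpow a (k - n))).
  assert (Ek : mpow a k = mmul (mpow a n) (mpow a (k - n)))
    by (rewrite <- mpowD; f_equal; lia).
  now rewrite mpowMn, Ek, mmul_assoc, Hc, mmul_assoc.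
Qed.

Lemma frac_in_A_of_conductor_mpow p q a n : p <> mzero -> q <> mzero ->
  frac_in_Anor p q -> conductor a -> mpow p n = mmul (mpow q n) a ->
  frac_in_A p q.
Proof.
  intros Hp Hq Hpq Ha Hpa.
  apply (frac_in_A_of_pow_tail _ _ n Hq). intros k Hk.
  destruct (Ha (mpow p (k - n)) (mpow q (k - n)) (mpow_neq0 p _ Hp)
             (mpow_neq0 q _ Hq) (frac_in_Anor_mpow p q _ Hpq)) as [c Hc].
  exists c. replace k with ((k - n) + n) by lia.
  now rewrite !mpowD, Hpa, mmul_CA, Hc, mmul_assoc, (mmul_comm _ (mpow q (k - n))).
Qed.

End ConductorRadical.

Theorem lemma1p19 (A : PMonoid) :
  cancellative A -> seminormal A ->
  (conductor_ideal_of_A A /\ conductor_radical_in_A A) /\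
  (conductor_ideal_of_Anor A /\ conductor_radical_in_Anor A).
Proof.
  intros cancelA seminormalA. split; split.
  - intros a b. apply conductor_mull.
  - intros a n. now apply conductor_of_mpow.
  - intros p q a Hp Hq Hpq Ha. destruct (Ha p q Hp Hq Hpq) as [c Hc].
    exists c. split; [|exact Hc].
    now apply (conductor_mul_frac_in_Anor A cancelA p q a c).
  - intros p q n Hp Hq Hpq Hn [a [Ha Hpa]].
    destruct (frac_in_A_of_conductor_mpow A cancelA seminormalA p q a n Hp Hq Hpq Ha Hpa)
      as [b Hb].
    exists b. split; [|exact Hb].
    apply (conductor_of_mpow A cancelA seminormalA b n Hn).
    replace (mpow b n) with a; [exact Ha|].
    apply (cancelA _ _ (mpow q n) (mpow_neq0 A cancelA q n Hq)).
    now rewrite mmul_comm, <- Hpa, Hb, mpowMn, mmul_comm.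
Qed.
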